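(* Let $n\ge 4$ and $t\in[n-1]$ be integers, and let $S$ be a weak $(2n-2t-1)$-resolving set of $K_n\times K_n$, with $\overline S=V\setminus S$. For all distinct $i,i'\in[n]$: if there is some $j\in[n]$ with $(i,j)\in\overline S$ and $(i',j)\in\overline S$, then $|(L_i\cup L_{i'})\cap\overline S|\le 2t+1$; otherwise $|(L_i\cup L_{i'})\cap\overline S|\le 2t+2$.
   Context: $K_n\times K_n$ is the direct product of two complete graphs on $n$ vertices: vertex set $V=[n]\times[n]$ with $[n]=\{1,\dots,n\}$, and $(i,j)$ adjacent to $(i',j')$ iff $i\ne i'$ and $j\ne j'$. For $i\in[n]$, $L_i=\{(i,j):j\in[n]\}$ is a vertical layer. For vertices $x,y,z$ and $S\subseteq V$, $\Delta_z(x,y)=|d(x,z)-d(y,z)|$ (with $d$ the graph distance) and $\Delta_S(x,y)=\sum_{z\in S}\Delta_z(x,y)$. A set $S$ is a weak $k$-resolving set if $\Delta_S(x,y)\ge k$ for all distinct $x,y\in V$. *)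

From mathcomp Require Import all_boot.
Set Implicit Arguments. Unset Strict Implicit. Unset Printing Implicit Defensive.

(* Vertices of K_n x K_n: [n] is represented by 'I_n = {0,...,n-1}. *)
Definition vtx (n : nat) : finType := ('I_n * 'I_n)%type.

Definition adj (n : nat) (x y : vtx n) : bool := (x.1 != y.1) && (x.2 != y.2).

Fixpoint walk (n : nat) (k : nat) (x y : vtx n) : bool :=
  match k with
  | 0 => x == y
  | k'.+1 => [exists z : vtx n, adj x z && walk k' z y]
  end.

(* Graph distance: least k with a walk of length k (shortest walks are paths,
   so k < |V| suffices); returns |V| if y is unreachable from x. *)
Definition dist (n : nat) (x y : vtx n) : nat :=
  find (fun k => walk k x y) (iota 0 #|vtx n|).

(* Delta_z(x,y) = |d(x,z) - d(y,z)| (absolute difference on nat). *)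
Definition Delta_z (n : nat) (z x y : vtx n) : nat :=
  (dist x z - dist y z) + (dist y z - dist x z).

Definition Delta_S (n : nat) (S : {set vtx n}) (x y : vtx n) : nat :=
  \sum_(z in S) Delta_z z x y.

Definition weak_resolving (n k : nat) (S : {set vtx n}) : Prop :=
  forall x y : vtx n, x != y -> k <= Delta_S S x y.

Definition layer (n : nat) (i : 'I_n) : {set vtx n} := [set x : vtx n | x.1 == i].

(** For n >= 3 any two vertices of K_n x K_n are at distance at most 2, so
    distances are read off from equality and adjacency alone.  For the two
    vertices x = (i,j) and y = (i',j) of a common column, a vertex z then
    separates them only if it lies in L_i or L_i', and it contributes 2 exactly
    when z is x or y.  Hence the weak resolving condition for (x,y) bounds
    |(L_i ∪ L_i') ∩ S| + [x ∈ S] + [y ∈ S] from below by 2n - 2t - 1, while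
    |L_i ∪ L_i'| = 2n.  Choosing the column j with x, y outside S gives the first
    bound; otherwise any column met by (L_i ∪ L_i') \ S has at most one of x, y
    in S, which gives the second. *)

From mathcomp Require Import all_boot zify.

Set Implicit Arguments.
Unset Strict Implicit.
Unset Printing Implicit Defensive.

Lemma sum_mem_card (T : finType) (A S : {set T}) :
  \sum_(z in S) (z \in A : nat) = #|A :&: S|.
Proof.
rewrite -sum1_card big_mkcond [RHS]big_mkcond /=; apply: eq_bigr => z _.
by rewrite inE andbC; case: (z \in S); case: (z \in A).
Qed.

Lemma sum_eq_mem (T : finType) (S : {set T}) (x : T) :
  \sum_(z in S) (z == x : nat) = (x \in S).
Proof.
rewrite big_mkcond (bigD1 x) //= eqxx big1 => [|z /negbTE->]; last by case: (z \in S).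
by case: (x \in S).
Qed.

Lemma exists_ord_neq2 n (a b : 'I_n) : 3 <= n -> exists c : 'I_n, (c != a) && (c != b).
Proof.
move=> n_ge3; have : 0 < #|~: [set a; b]|.
  by rewrite cardsCs setCK cards2 card_ord; case: (a != b) => /=; lia.
by case/card_gt0P => c; rewrite !inE negb_or; exists c.
Qed.

Section Distance.

Variable n : nat.
Hypothesis n_ge3 : 3 <= n.
Implicit Types x y z : vtx n.

Lemma walk1E x y : walk 1 x y = adj x y.
Proof.
apply/existsP/idP => [[z /andP[xz /eqP <-]] // | xy].
by exists y; rewrite xy eqxx.
Qed.

Lemma walk2 x y : walk 2 x y.
Proof.
have [a /andP[ax ay]] := exists_ord_neq2 x.1 y.1 n_ge3.
have [b /andP[bx by_]] := exists_ord_neq2 x.2 y.2 n_ge3.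
apply/existsP; exists (a, b); rewrite /adj /= eq_sym ax eq_sym bx /=.
by apply/existsP; exists y; rewrite /adj /= ay by_ eqxx.
Qed.

Lemma distE x y : dist x y = if x == y then 0 else if adj x y then 1 else 2.
Proof.
have [N cardV] : exists N, #|vtx n| = N.+3.
  by exists (n * n - 3); rewrite /vtx card_prod card_ord; nia.
rewrite /dist cardV /= -/(walk 1 x y) walk1E -/(walk 2 x y) walk2.
by case: (x == y); case: (adj x y).
Qed.

Lemma Delta_z_column (i i' j : 'I_n) z : i != i' ->
  Delta_z z (i, j) (i', j) =
  (z \in layer i :|: layer i') + (z == (i, j)) + (z == (i', j)).
Proof.
move=> ii'; rewrite /Delta_z !distE /adj; case: z => a b /=.
rewrite !inE !xpair_eqE /= ![_ == a]eq_sym ![_ == b]eq_sym.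
have [->|_] := eqVneq a i; first by rewrite (negbTE ii'); case: (b == j).
by case: (a == i'); case: (b == j).
Qed.

Lemma Delta_S_column (S : {set vtx n}) (i i' j : 'I_n) : i != i' ->
  Delta_S S (i, j) (i', j) =
  #|(layer i :|: layer i') :&: S| + ((i, j) \in S) + ((i', j) \in S).
Proof.
move=> ii'; rewrite /Delta_S.
under eq_bigr => z _ do rewrite Delta_z_column //.
by rewrite !big_split /= sum_mem_card !sum_eq_mem.
Qed.

End Distance.

Lemma card_layer n (i : 'I_n) : #|layer i| = n.
Proof.
have -> : layer i = setX [set i] [set: 'I_n] by apply/setP => z; rewrite !inE andbT.
by rewrite cardsX cards1 cardsT card_ord mul1n.
Qed.

Lemma card_layerU n (i i' : 'I_n) : i != i' -> #|layer i :|: layer i'| = 2 * n.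
Proof.
move=> ii'; rewrite cardsU !card_layer.
suff -> : layer i :&: layer i' = set0 by rewrite cards0; lia.
apply/setP => z; rewrite !inE; case: (z.1 =P i) => [->|//].
by rewrite (negbTE ii').
Qed.

Lemma card_layerU_setC_le n k (S : {set vtx n}) (i i' : 'I_n) :
  3 <= n -> weak_resolving k S -> i != i' -> forall j : 'I_n,
  k + #|(layer i :|: layer i') :&: ~: S| <= 2 * n + ((i, j) \in S) + ((i', j) \in S).
Proof.
move=> n_ge3 resS ii' j.
have xy : (i, j) != (i', j) :> vtx n by rewrite xpair_eqE (negbTE ii').
have := resS _ _ xy; rewrite Delta_S_column //.
have := cardsID S (layer i :|: layer i'); rewrite setDE card_layerU //; lia.
Qed.

Theorem mainTheorem10 (n t : nat) (S : {set vtx n}) :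
  4 <= n -> 1 <= t <= n.-1 ->
  weak_resolving (2 * n - 2 * t - 1) S ->
  forall i i' : 'I_n, i != i' ->
    ((exists j : 'I_n, ((i, j) \in ~: S) /\ ((i', j) \in ~: S)) ->
       #|(layer i :|: layer i') :&: ~: S| <= 2 * t + 1) /\
    (~ (exists j : 'I_n, ((i, j) \in ~: S) /\ ((i', j) \in ~: S)) ->
       #|(layer i :|: layer i') :&: ~: S| <= 2 * t + 2).
Proof.
move=> n_ge4 _ resS i i' ii'.
have bound := card_layerU_setC_le (ltnW n_ge4) resS ii'.
split=> [[j] | _].
  by rewrite !inE => -[/negbTE xS /negbTE yS]; have := bound j; rewrite xS yS; lia.
have [-> | [[a b]]] := set_0Vmem ((layer i :|: layer i') :&: ~: S); first by rewrite cards0.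
rewrite !inE /= => /andP[ai abS].
(* The casts and [set] identify terms that differ only in how the vertex type
   was elaborated, which [lia] would otherwise treat as distinct atoms. *)
suff col_b : ((i, b : 'I_n) \in S) + ((i', b : 'I_n) \in S) <= 1.
  by have := bound b; set X := #|_ :&: ~: S|; lia.
by move: abS; case/orP: ai => /eqP <-; case: (_ \in S); case: (_ \in S).
Qed.
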